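(* For every 3-periodic $P_1P_2P_3$ of $\mathcal{E}$, let $A_1^\dagger$ and $A_2^\dagger$ be the areas of its $f_1$-inversive and $f_2$-inversive triangles. Then \[A_1^\dagger A_2^\dagger=\frac{\rho^8}{8a^8b^2}\left[(a^4+2a^2b^2+4b^4)\delta+a^6+\tfrac32 a^4b^2+4b^6\right],\] which is independent of the 3-periodic.
   Context: Let $a>b>0$ and let $\mathcal{E}$ be the ellipse $x^2/a^2+y^2/b^2=1$. Set $c=\sqrt{a^2-b^2}$, $\delta=\sqrt{a^4-a^2b^2+b^4}$, and let the foci be $f_1=(-c,0)$, $f_2=(c,0)$. A 3-periodic is a triangle $P_1P_2P_3$ with vertices on $\mathcal{E}$ such that at each vertex the normal to $\mathcal{E}$ bisects the angle formed by the two sides meeting at that vertex; these form a one-parameter family (one through every point of $\mathcal{E}$). Fix $\rho>0$. For $j=1,2$, the $f_j$-inversive triangle of $P_1P_2P_3$ has vertices $P_{j,i}^\dagger=f_j+(\rho/d_{j,i})^2(P_i-f_j)$, where $d_{j,i}=|P_i-f_j|$ (inversion in the circle of radius $\rho$ centered at $f_j$). *)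

From Stdlib Require Import Reals.
Open Scope R_scope.

Definition pt := (R * R)%type.

Definition padd (p q : pt) : pt := (fst p + fst q, snd p + snd q).
Definition psub (p q : pt) : pt := (fst p - fst q, snd p - snd q).
Definition pscale (k : R) (p : pt) : pt := (k * fst p, k * snd p).
Definition dot (p q : pt) : R := fst p * fst q + snd p * snd q.
Definition cross (p q : pt) : R := fst p * snd q - snd p * fst q.
Definition dist (p q : pt) : R := sqrt (dot (psub p q) (psub p q)).

Definition on_ellipse (a b : R) (p : pt) : Prop :=
  (fst p)^2 / a^2 + (snd p)^2 / b^2 = 1.

Definition ell_normal (a b : R) (p : pt) : pt := (fst p / a^2, snd p / b^2).

(* the normal at P makes equal angles with the sides PQ and PR,
   i.e. it bisects the angle QPR: cos(n, PQ) = cos(n, PR). *)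
Definition normal_bisects (a b : R) (P Q S : pt) : Prop :=
  dot (ell_normal a b P) (psub Q P) / dist Q P
  = dot (ell_normal a b P) (psub S P) / dist S P.

Definition three_periodic (a b : R) (P1 P2 P3 : pt) : Prop :=
  P1 <> P2 /\ P2 <> P3 /\ P3 <> P1 /\
  on_ellipse a b P1 /\ on_ellipse a b P2 /\ on_ellipse a b P3 /\
  normal_bisects a b P1 P3 P2 /\
  normal_bisects a b P2 P1 P3 /\
  normal_bisects a b P3 P2 P1.

Definition focus1 (a b : R) : pt := (- sqrt (a^2 - b^2), 0).
Definition focus2 (a b : R) : pt := (sqrt (a^2 - b^2), 0).

Definition invert (rho : R) (f P : pt) : pt :=
  padd f (pscale ((rho / dist P f)^2) (psub P f)).

Definition tri_area (A B C : pt) : R := Rabs (cross (psub B A) (psub C A)) / 2.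

Definition inversive_area (rho : R) (f P1 P2 P3 : pt) : R :=
  tri_area (invert rho f P1) (invert rho f P2) (invert rho f P3).

From Pilot Require Import Defs.
From Stdlib Require Import Reals Lra.
Open Scope R_scope.

(** Write the vertices as P_i = (a X_i, b Y_i) with (X_i, Y_i) on the unit circle, and
    c^2 = a^2 - b^2.  The proof has three parts.

    The bisection property says that the quantity (1 - X X' - Y Y') / |P P'|
      (a rescaled cosine between normal and side) is the same at both sides of a vertex,
      hence on all three sides.  Squaring gives one symmetric bilinear relation between
      the endpoints of each side; since three distinct points of a circle are not
      collinear, this forces a quadratic equation for the square of that ratio.  Its
      root shows that every side satisfies  u (1-u) + (1-u) X X' + u Y Y' = 0  with
      u = (delta - b^2)/c^2 (the sides touch the confocal caustic).
    - Inversion.  Focal distances are affine, |P_i - (s,0)| = a - s X_i, so each inversive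
      area is rho^4 |b T_s| / (2 prod (a - s X_i)^2) for an explicit cubic T_s.
    - Invariant.  Parametrising the circle rationally, the two sides through P_2 make the
      parameters of P_1, P_3 the roots of a quadratic; Vieta and one rational identity give
      2 a^8 b^4 T_c T_(-c) = K (prod (a^2 - c^2 X_i^2))^2, K the bracket of the theorem.
      Multiplying the two area formulas, prod (a - c X_i)(a + c X_i) cancels. *)

Lemma sqdist_pos (X Y X' Y' : R) : (X, Y) <> (X', Y') -> 0 < (X - X')^2 + (Y - Y')^2.
Proof.
  intro D.
  assert (Hx := pow2_ge_0 (X - X')). assert (Hy := pow2_ge_0 (Y - Y')).
  destruct (Req_dec X X') as [-> | HX].
  - assert (HY : Y - Y' <> 0) by (intro; apply D; f_equal; lra).
    apply Rsqr_pos_lt in HY. rewrite Rsqr_pow2 in HY. lra.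
  - assert (HX' : X - X' <> 0) by lra.
    apply Rsqr_pos_lt in HX'. rewrite Rsqr_pow2 in HX'. lra.
Qed.

Lemma ellipse_unit_coords (a b : R) (P : pt) :
  0 < a -> 0 < b -> on_ellipse a b P -> exists X Y, P = (a*X, b*Y) /\ X^2 + Y^2 = 1.
Proof.
  intros Ha Hb E. destruct P as [x y]. exists (x/a), (y/b). split.
  - f_equal; field; lra.
  - unfold on_ellipse in E; cbn [fst snd] in E. rewrite <- E. field. split; lra.
Qed.

Lemma unit_coords_distinct (a b X Y X' Y' : R) :
  (a*X, b*Y) <> (a*X', b*Y') -> (X, Y) <> (X', Y').
Proof. intros D E. injection E as -> ->. apply D. reflexivity. Qed.

Definition det3 (X1 Y1 X2 Y2 X3 Y3 : R) := X1*(Y2-Y3) - X2*(Y1-Y3) + X3*(Y1-Y2).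

(** A line meets the unit circle in at most two points, so three distinct points of the
    circle are never collinear.  Writing v = P2 - P1 and w = P3 - P1, collinearity gives
    |v|^2 w = (v.w) v, and the circle equations then force w = 0 or w = v. *)
Lemma circle_not_collinear (X1 Y1 X2 Y2 X3 Y3 : R) :
  X1^2 + Y1^2 = 1 -> X2^2 + Y2^2 = 1 -> X3^2 + Y3^2 = 1 ->
  (X1, Y1) <> (X2, Y2) -> (X2, Y2) <> (X3, Y3) -> (X3, Y3) <> (X1, Y1) ->
  det3 X1 Y1 X2 Y2 X3 Y3 <> 0.
Proof.
  intros C1 C2 C3 D12 D23 D31 Hdet.
  set (n := (X2 - X1)^2 + (Y2 - Y1)^2).
  set (m := (X2 - X1)*(X3 - X1) + (Y2 - Y1)*(Y3 - Y1)).
  set (w2 := (X3 - X1)^2 + (Y3 - Y1)^2).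
  assert (Hn : 0 < n) by (apply sqdist_pos; congruence).
  assert (Wx : n*(X3 - X1) = m*(X2 - X1)).
  { transitivity (m*(X2 - X1) - (Y2 - Y1)*det3 X1 Y1 X2 Y2 X3 Y3);
      [unfold n, m, det3; ring | rewrite Hdet; ring]. }
  assert (Wy : n*(Y3 - Y1) = m*(Y2 - Y1)).
  { transitivity (m*(Y2 - Y1) + (X2 - X1)*det3 X1 Y1 X2 Y2 X3 Y3);
      [unfold n, m, det3; ring | rewrite Hdet; ring]. }
  assert (Cv : 2*(X1*(X2 - X1) + Y1*(Y2 - Y1)) = - n) by (unfold n; lra).
  assert (Cw : 2*(X1*(X3 - X1) + Y1*(Y3 - Y1)) = - w2) by (unfold w2; lra).
  assert (Hw2 : n*w2 = m^2).
  { apply (Rmult_eq_reg_l n); [| lra].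
    transitivity ((n*(X3 - X1))^2 + (n*(Y3 - Y1))^2); [unfold w2; ring |].
    rewrite Wx, Wy. unfold n. ring. }
  assert (Hm : w2 = m).
  { apply (Rmult_eq_reg_l n); [| lra].
    transitivity (- n * (2*(X1*(X3 - X1) + Y1*(Y3 - Y1)))); [rewrite Cw; ring |].
    transitivity (- 2*(X1*(n*(X3 - X1)) + Y1*(n*(Y3 - Y1)))); [ring |].
    rewrite Wx, Wy.
    transitivity (- m*(2*(X1*(X2 - X1) + Y1*(Y2 - Y1)))); [ring |].
    rewrite Cv. ring. }
  assert (Hroots : m*(m - n) = 0).
  { rewrite Hm in Hw2. replace (m*(m - n)) with (m^2 - n*m) by ring. lra. }
  apply Rmult_integral in Hroots as [H0 | Hmn].
  - assert (X3 - X1 = 0 /\ Y3 - Y1 = 0) as [Ex Ey] by (unfold w2 in Hm; nra).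
    apply D31. f_equal; lra.
  - assert (Hmn' : m = n) by lra. rewrite Hmn' in Wx, Wy.
    apply D23. f_equal.
    + apply (Rmult_eq_reg_l n) in Wx; lra.
    + apply (Rmult_eq_reg_l n) in Wy; lra.
Qed.

(** With M the matrix of rows (X_i, Y_i, 1), Q = M diag(A,B,s) M^T and
    G = M diag(1,1,-1) M^T one has tr(adj Q . G) = det(M)^2 (B s + A s - A B); the
    hypotheses make Q diagonal and the diagonal of G zero, so this trace vanishes. *)
Lemma bilinear_triangle_relation (X1 Y1 X2 Y2 X3 Y3 s A B : R) :
  X1^2 + Y1^2 = 1 -> X2^2 + Y2^2 = 1 -> X3^2 + Y3^2 = 1 ->
  s + A*(X1*X2) + B*(Y1*Y2) = 0 ->
  s + A*(X2*X3) + B*(Y2*Y3) = 0 ->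
  s + A*(X3*X1) + B*(Y3*Y1) = 0 ->
  det3 X1 Y1 X2 Y2 X3 Y3 <> 0 ->
  B*s + A*s - A*B = 0.
Proof.
  intros C1 C2 C3 R12 R23 R31 Hdet.
  set (q11 := s + A*X1^2 + B*Y1^2); set (q22 := s + A*X2^2 + B*Y2^2);
    set (q33 := s + A*X3^2 + B*Y3^2).
  assert (Trace : (det3 X1 Y1 X2 Y2 X3 Y3)^2 * (B*s + A*s - A*B) =
      (q22*q33 - (s + A*(X2*X3) + B*(Y2*Y3))^2)*(X1^2+Y1^2-1)
    + (q11*q33 - (s + A*(X3*X1) + B*(Y3*Y1))^2)*(X2^2+Y2^2-1)
    + (q11*q22 - (s + A*(X1*X2) + B*(Y1*Y2))^2)*(X3^2+Y3^2-1)
    + 2*(((s + A*(X3*X1) + B*(Y3*Y1))*(s + A*(X2*X3) + B*(Y2*Y3))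
           - (s + A*(X1*X2) + B*(Y1*Y2))*q33)*(X1*X2+Y1*Y2-1)
       + ((s + A*(X1*X2) + B*(Y1*Y2))*(s + A*(X2*X3) + B*(Y2*Y3))
           - (s + A*(X3*X1) + B*(Y3*Y1))*q22)*(X1*X3+Y1*Y3-1)
       + ((s + A*(X1*X2) + B*(Y1*Y2))*(s + A*(X3*X1) + B*(Y3*Y1))
           - q11*(s + A*(X2*X3) + B*(Y2*Y3)))*(X2*X3+Y2*Y3-1))).
  { unfold q11, q22, q33, det3. ring. }
  rewrite R12, R23, R31, C1, C2, C3 in Trace.
  assert (Hsq : (det3 X1 Y1 X2 Y2 X3 Y3)^2 <> 0) by (apply pow_nonzero; exact Hdet).
  apply (Rmult_eq_reg_l ((det3 X1 Y1 X2 Y2 X3 Y3)^2)); [rewrite Trace; ring | exact Hsq].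
Qed.

Definition ell_chord (a b X Y X' Y' : R) : R := sqrt (a^2*(X'-X)^2 + b^2*(Y'-Y)^2).

Lemma ell_chord_pos (a b X Y X' Y' : R) :
  0 < a -> 0 < b -> (X, Y) <> (X', Y') -> 0 < ell_chord a b X Y X' Y'.
Proof.
  intros Ha Hb D. unfold ell_chord. apply sqrt_lt_R0.
  assert (H := sqdist_pos X' Y' X Y ltac:(congruence)).
  assert (Hx := pow2_ge_0 (X' - X)). assert (Hy := pow2_ge_0 (Y' - Y)).
  assert (Ha2 : 0 < a^2) by (apply pow_lt; lra). assert (Hb2 : 0 < b^2) by (apply pow_lt; lra).
  destruct (Rle_lt_dec ((X' - X)^2) 0); nra.
Qed.

(** For the vertex (a X, b Y) and the chord towards (a X', b Y'): minus the cosine of the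
    angle between the normal (X/a, Y/b) and the chord, times the length of that normal.
    The bisection property says it is the same for both sides through a vertex. *)
Definition bisector_ratio (a b X Y X' Y' : R) : R :=
  (1 - X*X' - Y*Y') / ell_chord a b X Y X' Y'.

Lemma bisector_ratio_sym (a b X Y X' Y' : R) :
  bisector_ratio a b X Y X' Y' = bisector_ratio a b X' Y' X Y.
Proof. unfold bisector_ratio, ell_chord. f_equal; [ring | f_equal; ring]. Qed.

Lemma normal_bisects_unit (a b X Y X' Y' X'' Y'' : R) :
  0 < a -> 0 < b -> X^2 + Y^2 = 1 ->
  normal_bisects a b (a*X, b*Y) (a*X', b*Y') (a*X'', b*Y'') ->
  bisector_ratio a b X Y X' Y' = bisector_ratio a b X Y X'' Y''.
Proof.
  intros Ha Hb C H.
  unfold normal_bisects, Defs.dist, dot, ell_normal, psub in H; cbn [fst snd] in H.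
  assert (Num : forall X' Y' : R,
    a*X/a^2*(a*X'-a*X) + b*Y/b^2*(b*Y'-b*Y) = - (1 - X*X' - Y*Y')).
  { intros U V. transitivity (X*U + Y*V - (X^2 + Y^2)); [field; lra | rewrite C; ring]. }
  assert (Len : forall X' Y' : R,
    (a*X'-a*X)*(a*X'-a*X) + (b*Y'-b*Y)*(b*Y'-b*Y) = a^2*(X'-X)^2 + b^2*(Y'-Y)^2).
  { intros. ring. }
  rewrite !Num, !Len in H.
  unfold bisector_ratio, ell_chord. unfold Rdiv in *. lra.
Qed.

Lemma squared_bisector_relation (a b X Y X' Y' J : R) :
  0 < a -> 0 < b -> X^2 + Y^2 = 1 -> X'^2 + Y'^2 = 1 -> (X, Y) <> (X', Y') ->
  bisector_ratio a b X Y X' Y' = J ->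
  (1 - (a^2+b^2)*J^2) + ((a^2-b^2)*J^2 - 1)*(X*X') + (-(a^2-b^2)*J^2 - 1)*(Y*Y') = 0.
Proof.
  intros Ha Hb C C' D HJ.
  assert (HL := ell_chord_pos a b X Y X' Y' Ha Hb D).
  assert (HJ' : 1 - X*X' - Y*Y' = J * ell_chord a b X Y X' Y')
    by (rewrite <- HJ; unfold bisector_ratio; field; lra).
  set (w := 1 - X*X' - Y*Y') in *.
  assert (Hw : 0 < w).
  { assert (2*w = (X-X')^2 + (Y-Y')^2) by (unfold w; lra).
    assert (Hd := sqdist_pos X Y X' Y' D). lra. }
  assert (HX : (X'-X)^2 = w*(1 - X*X' + Y*Y')).
  { transitivity (w*(1 - X*X' + Y*Y') + (X^2+Y^2-1)*Y'^2 + (X'^2+Y'^2-1)*(1-X^2));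
      [unfold w; ring | rewrite C, C'; ring]. }
  assert (HY : (Y'-Y)^2 = w*(1 + X*X' - Y*Y')).
  { transitivity (w*(1 + X*X' - Y*Y') + (X^2+Y^2-1)*X'^2 + (X'^2+Y'^2-1)*(1-Y^2));
      [unfold w; ring | rewrite C, C'; ring]. }
  assert (Hsq : w^2 = J^2 * (a^2*(X'-X)^2 + b^2*(Y'-Y)^2)).
  { rewrite HJ'. unfold ell_chord. rewrite Rpow_mult_distr, pow2_sqrt; [ring |].
    assert (0 <= a^2) by apply pow2_ge_0. assert (0 <= b^2) by apply pow2_ge_0.
    assert (0 <= (X'-X)^2) by apply pow2_ge_0. assert (0 <= (Y'-Y)^2) by apply pow2_ge_0.
    nra. }
  rewrite HX, HY in Hsq.
  assert (Hw' : w = J^2*(a^2*(1 - X*X' + Y*Y') + b^2*(1 + X*X' - Y*Y'))).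
  { apply (Rmult_eq_reg_l w); [| lra].
    transitivity (w^2); [ring | rewrite Hsq; ring]. }
  transitivity (w - J^2*(a^2*(1 - X*X' + Y*Y') + b^2*(1 + X*X' - Y*Y'))).
  - unfold w. ring.
  - rewrite <- Hw'. ring.
Qed.

Lemma delta_spec (a b : R) :
  0 < b -> b < a ->
  let d := sqrt (a^4 - a^2*b^2 + b^4) in d^2 = a^4 - a^2*b^2 + b^4 /\ 0 < d.
Proof.
  intros Hb Hab d.
  assert (Hpos : 0 < a^4 - a^2*b^2 + b^4).
  { replace (a^4 - a^2*b^2 + b^4) with (a^2*(a^2 - b^2) + b^2*b^2) by ring.
    assert (0 < b^2) by nra. assert (0 < a^2 - b^2) by nra. nra. }
  split; [apply pow2_sqrt; lra | apply sqrt_lt_R0; exact Hpos].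
Qed.

Lemma bisector_ratio_root (a b d k : R) :
  0 < b -> b < a -> d^2 = a^4 - a^2*b^2 + b^4 -> 0 < d -> 0 <= k ->
  (a^2-b^2)^2*k^2 + 2*(a^2+b^2)*k - 3 = 0 ->
  (a^2-b^2)^2*k = 2*d - a^2 - b^2.
Proof.
  intros Hb Hab Hd Hd0 Hk Hq.
  set (Z := (a^2-b^2)^2*k + a^2 + b^2).
  assert (HZ : 0 <= Z).
  { assert (0 <= (a^2-b^2)^2*k) by (apply Rmult_le_pos; [apply pow2_ge_0 | exact Hk]).
    assert (0 <= a^2) by apply pow2_ge_0. assert (0 <= b^2) by apply pow2_ge_0.
    unfold Z. lra. }
  assert (Hfact : (Z - 2*d)*(Z + 2*d) = 0).
  { transitivity ((a^2-b^2)^2*((a^2-b^2)^2*k^2 + 2*(a^2+b^2)*k - 3) - 4*(d^2 - (a^4 - a^2*b^2 + b^4)));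
      [unfold Z; ring | rewrite Hq, Hd; ring]. }
  apply Rmult_integral in Hfact as [H | H]; unfold Z in *; lra.
Qed.

Lemma caustic_parameter_facts (a b d : R) :
  0 < b -> b < a -> d^2 = a^4 - a^2*b^2 + b^4 -> 0 < d ->
  let u := (d - b^2)/(a^2 - b^2) in
  1/2 < u < 1 /\ a^2 = (a^2-b^2)*u*(2-u)/(2*u-1) /\ b^2 + u*(a^2-b^2) = d.
Proof.
  intros Hb Hab Hd Hd0 u.
  assert (Hc : 0 < a^2 - b^2) by nra.
  assert (Hb2 : 0 < b^2) by nra.
  assert (Hda : d < a^2).
  { assert ((a^2)^2 - d^2 = b^2*(a^2-b^2)) by (rewrite Hd; ring).
    assert (0 < b^2*(a^2-b^2)) by nra. nra. }
  assert (H2d : a^2 + b^2 < 2*d).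
  { assert ((2*d)^2 - (a^2+b^2)^2 = 3*(a^2-b^2)^2) by (rewrite Rpow_mult_distr, Hd; ring).
    assert (0 < 3*(a^2-b^2)^2) by nra. nra. }
  assert (Hu1 : 2*u - 1 = (2*d - a^2 - b^2)/(a^2-b^2)) by (unfold u; field; lra).
  assert (Hu2 : 1 - u = (a^2 - d)/(a^2-b^2)) by (unfold u; field; lra).
  assert (Hu1p : 0 < 2*u - 1) by (rewrite Hu1; apply Rdiv_lt_0_compat; lra).
  assert (Hu2p : 0 < 1 - u) by (rewrite Hu2; apply Rdiv_lt_0_compat; lra).
  split; [lra | split].
  - apply (Rmult_eq_reg_r ((2*u - 1)*(a^2-b^2))); [| apply Rmult_integral_contrapositive; lra].
    transitivity (a^2*(2*d - a^2 - b^2)); [rewrite Hu1; field; lra |].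
    transitivity ((d - b^2)*(2*(a^2-b^2) - (d - b^2)) + (d^2 - (a^4 - a^2*b^2 + b^4)));
      [ring | rewrite Hd; unfold u; field; lra].
  - unfold u. field. lra.
Qed.

(** The caustic of the 3-periodics, in unit-circle coordinates: the side from (X, Y) to
    (X', Y') is tangent to it iff  u (1 - u) + (1 - u) X X' + u Y Y' = 0. *)
Definition caustic_side (u X Y X' Y' : R) : Prop :=
  u*(1-u) + (1-u)*(X*X') + u*(Y*Y') = 0.

Lemma caustic_side_of_bisector (a b d k X Y X' Y' : R) :
  0 < b -> b < a -> d^2 = a^4 - a^2*b^2 + b^4 ->
  (a^2-b^2)^2*k = 2*d - a^2 - b^2 ->
  (1 - (a^2+b^2)*k) + ((a^2-b^2)*k - 1)*(X*X') + (-(a^2-b^2)*k - 1)*(Y*Y') = 0 ->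
  caustic_side ((d - b^2)/(a^2 - b^2)) X Y X' Y'.
Proof.
  intros Hb Hab Hd Hk Hrel. unfold caustic_side.
  assert (Hc : 0 < a^2 - b^2) by nra.
  set (u := (d - b^2)/(a^2 - b^2)).
  assert (Hscale : -2*(a^2-b^2)^2*(u*(1-u) + (1-u)*(X*X') + u*(Y*Y'))
     = (a^2-b^2)^2*((1 - (a^2+b^2)*k) + ((a^2-b^2)*k - 1)*(X*X') + (-(a^2-b^2)*k - 1)*(Y*Y'))
       + 2*(d^2 - (a^4 - a^2*b^2 + b^4))).
  { assert (Hk' : k = (2*d - a^2 - b^2)/(a^2-b^2)^2) by (rewrite <- Hk; field; lra).
    rewrite Hk'. unfold u. field. lra. }
  rewrite Hrel, Hd in Hscale.
  apply (Rmult_eq_reg_l (-2*(a^2-b^2)^2)); [lra |].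
  assert (0 < (a^2-b^2)^2) by (apply pow_lt; lra). nra.
Qed.

(** Bisection at P2 and P3 make the
    bisector ratio the same on all three sides; the bilinear relations of the three sides
    then pin down its square. *)
Lemma three_periodic_caustic (a b d X1 Y1 X2 Y2 X3 Y3 : R) :
  0 < b -> b < a -> d^2 = a^4 - a^2*b^2 + b^4 -> 0 < d ->
  X1^2 + Y1^2 = 1 -> X2^2 + Y2^2 = 1 -> X3^2 + Y3^2 = 1 ->
  (X1, Y1) <> (X2, Y2) -> (X2, Y2) <> (X3, Y3) -> (X3, Y3) <> (X1, Y1) ->
  bisector_ratio a b X2 Y2 X1 Y1 = bisector_ratio a b X2 Y2 X3 Y3 ->
  bisector_ratio a b X3 Y3 X2 Y2 = bisector_ratio a b X3 Y3 X1 Y1 ->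
  let u := (d - b^2)/(a^2 - b^2) in
  caustic_side u X1 Y1 X2 Y2 /\ caustic_side u X2 Y2 X3 Y3 /\ caustic_side u X3 Y3 X1 Y1.
Proof.
  intros Hb Hab Hd Hd0 C1 C2 C3 D12 D23 D31 G2 G3 u.
  assert (Ha : 0 < a) by lra.
  set (J := bisector_ratio a b X1 Y1 X2 Y2).
  assert (J23 : bisector_ratio a b X2 Y2 X3 Y3 = J)
    by (rewrite <- G2; apply bisector_ratio_sym).
  assert (J31 : bisector_ratio a b X3 Y3 X1 Y1 = J)
    by (rewrite <- G3, bisector_ratio_sym; exact J23).
  assert (Q12 := squared_bisector_relation a b X1 Y1 X2 Y2 J Ha Hb C1 C2 D12 eq_refl).
  assert (Q23 := squared_bisector_relation a b X2 Y2 X3 Y3 J Ha Hb C2 C3 D23 J23).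
  assert (Q31 := squared_bisector_relation a b X3 Y3 X1 Y1 J Ha Hb C3 C1 D31 J31).
  assert (Hq : (a^2-b^2)^2*(J^2)^2 + 2*(a^2+b^2)*J^2 - 3 = 0).
  { rewrite <- (bilinear_triangle_relation X1 Y1 X2 Y2 X3 Y3 _ _ _ C1 C2 C3 Q12 Q23 Q31
                 (circle_not_collinear X1 Y1 X2 Y2 X3 Y3 C1 C2 C3 D12 D23 D31)).
    ring. }
  assert (Hk := bisector_ratio_root a b d (J^2) Hb Hab Hd Hd0 (pow2_ge_0 J) Hq).
  repeat split; eapply caustic_side_of_bisector; eassumption.
Qed.

Lemma inversive_area_formula (rho : R) (f P1 P2 P3 : pt) (d1 d2 d3 : R) :
  0 < d1 -> 0 < d2 -> 0 < d3 ->
  Defs.dist P1 f = d1 -> Defs.dist P2 f = d2 -> Defs.dist P3 f = d3 ->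
  inversive_area rho f P1 P2 P3 =
  rho^4 * Rabs (d3^2 * cross (psub P1 f) (psub P2 f) + d1^2 * cross (psub P2 f) (psub P3 f)
                + d2^2 * cross (psub P3 f) (psub P1 f)) / (2*(d1^2*d2^2*d3^2)).
Proof.
  intros h1 h2 h3 e1 e2 e3.
  unfold inversive_area, tri_area, invert. rewrite e1, e2, e3.
  destruct f as [f1 f2], P1 as [p1 q1], P2 as [p2 q2], P3 as [p3 q3].
  unfold cross, psub, padd, pscale; cbn [fst snd].
  assert (Hden : 0 < d1^2*d2^2*d3^2)
    by (apply Rmult_lt_0_compat; [apply Rmult_lt_0_compat |]; apply pow_lt; lra).
  assert (Hscale : 0 <= rho^4/(d1^2*d2^2*d3^2)).
  { apply Rmult_le_pos; [| apply Rlt_le, Rinv_0_lt_compat; exact Hden].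
    replace (rho^4) with ((rho^2)^2) by ring. apply pow2_ge_0. }
  match goal with |- Rabs ?E / 2 = rho^4 * Rabs ?S / _ =>
    replace E with ((rho^4/(d1^2*d2^2*d3^2)) * S) by (field; lra) end.
  rewrite Rabs_mult, (Rabs_pos_eq _ Hscale). field. lra.
Qed.

Lemma focal_distance (a b s X Y : R) :
  0 < b -> b < a -> s^2 = a^2 - b^2 -> X^2 + Y^2 = 1 ->
  Defs.dist (a*X, b*Y) (s, 0) = a - s*X /\ 0 < a - s*X.
Proof.
  intros Hb Hab Hs C.
  assert (Hpos : 0 < a - s*X).
  { assert (HX : X^2 <= 1) by (assert (h := pow2_ge_0 Y); lra).
    assert (Hlt : (s*X)^2 < a^2).
    { rewrite Rpow_mult_distr, Hs. assert (0 < b^2) by nra. nra. }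
    destruct (Rlt_le_dec (s*X) a) as [h | h]; [lra | nra]. }
  split; [| exact Hpos].
  unfold Defs.dist, dot, psub; cbn [fst snd].
  replace ((a*X - s)*(a*X - s) + (b*Y - 0)*(b*Y - 0)) with ((a - s*X)^2).
  - apply sqrt_pow2. lra.
  - transitivity ((a - s*X)^2 + b^2*(X^2 + Y^2 - 1) - (s^2 - (a^2 - b^2))*(X^2 - 1));
      [rewrite C, Hs; ring | ring].
Qed.

(** Up to the factor b, the numerator of the inversive area formula about the point (s, 0),
    once the focal distances a - s X_i are substituted. *)
Definition focal_numerator (a s X1 Y1 X2 Y2 X3 Y3 : R) : R :=
  (a - s*X3)^2*(a*(X1*Y2 - X2*Y1) - s*(Y2 - Y1))
  + (a - s*X1)^2*(a*(X2*Y3 - X3*Y2) - s*(Y3 - Y2))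
  + (a - s*X2)^2*(a*(X3*Y1 - X1*Y3) - s*(Y1 - Y3)).

Lemma focal_inversive_area (a b s rho X1 Y1 X2 Y2 X3 Y3 : R) :
  0 < b -> b < a -> s^2 = a^2 - b^2 ->
  X1^2 + Y1^2 = 1 -> X2^2 + Y2^2 = 1 -> X3^2 + Y3^2 = 1 ->
  inversive_area rho (s, 0) (a*X1, b*Y1) (a*X2, b*Y2) (a*X3, b*Y3) =
  rho^4 * Rabs (b * focal_numerator a s X1 Y1 X2 Y2 X3 Y3)
    / (2*((a - s*X1)^2*(a - s*X2)^2*(a - s*X3)^2)).
Proof.
  intros Hb Hab Hs C1 C2 C3.
  destruct (focal_distance a b s X1 Y1 Hb Hab Hs C1) as [F1 P1].
  destruct (focal_distance a b s X2 Y2 Hb Hab Hs C2) as [F2 P2].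
  destruct (focal_distance a b s X3 Y3 Hb Hab Hs C3) as [F3 P3].
  rewrite (inversive_area_formula rho _ _ _ _ _ _ _ P1 P2 P3 F1 F2 F3).
  unfold focal_numerator, cross, psub; cbn [fst snd].
  do 3 f_equal. ring.
Qed.

(** Rational parametrisation of the unit circle (all points except (-1, 0)). *)
Definition cx (t : R) : R := (1 - t^2)/(1 + t^2).
Definition cy (t : R) : R := 2*t/(1 + t^2).

Lemma one_plus_sq_nz (t : R) : 1 + t^2 <> 0.
Proof. nra. Qed.

Lemma circle_param (X Y : R) :
  X^2 + Y^2 = 1 -> X <> -1 -> exists t, X = cx t /\ Y = cy t.
Proof.
  intros C H. exists (Y/(1 + X)).
  assert (H1 : 1 + X <> 0) by lra.
  assert (Ht : (Y/(1 + X))^2 = (1 - X)/(1 + X)).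
  { transitivity (Y^2/(1 + X)^2); [field; exact H1 |].
    replace (Y^2) with ((1 - X)*(1 + X)) by lra. field. exact H1. }
  unfold cx, cy. rewrite Ht. split; field; split; lra.
Qed.

(** In terms of the elementary symmetric functions s1, s2, s3 of the parameters of the
    three vertices, the focal numerator about (s, 0) is the Vandermonde product times
    the cubic  4 a E(a^2, s^2) + 8 s^3 O  below. *)
Definition cubic_even (A S s1 s2 s3 : R) : R :=
  (A - 3*S)*(1 + s3^2) + (A - S)*((s1^2 - 2*s2) + (s2^2 - 2*s1*s3)) + 2*S*(s2 + s1*s3).
Definition cubic_odd (s1 s2 s3 : R) : R := 1 - s2 + s1*s3 - s3^2.
Definition focal_cubic (a s s1 s2 s3 : R) : R :=
  4*a*cubic_even (a^2) (s^2) s1 s2 s3 + 8*s^3*cubic_odd s1 s2 s3.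

Lemma focal_numerator_param (a s t1 t2 t3 : R) :
  focal_numerator a s (cx t1) (cy t1) (cx t2) (cy t2) (cx t3) (cy t3) =
  (t1-t2)*(t2-t3)*(t3-t1)*focal_cubic a s (t1+t2+t3) (t1*t2+t2*t3+t3*t1) (t1*t2*t3)
  / ((1+t1^2)^2*(1+t2^2)^2*(1+t3^2)^2).
Proof.
  unfold focal_numerator, focal_cubic, cubic_even, cubic_odd, cx, cy.
  field. repeat split; apply one_plus_sq_nz.
Qed.

Lemma focal_cubic_product (a c s1 s2 s3 : R) :
  focal_cubic a c s1 s2 s3 * focal_cubic a (-c) s1 s2 s3 =
  16*a^2*(cubic_even (a^2) (c^2) s1 s2 s3)^2 - 64*(c^2)^3*(cubic_odd s1 s2 s3)^2.
Proof. unfold focal_cubic. replace ((-c)^2) with (c^2) by ring. ring. Qed.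

(** The product (a - c X)(a + c X) of the two focal distances, cleared of denominators. *)
Definition focal_weight (A C t : R) : R := (A - C) + 2*(A + C)*t^2 + (A - C)*t^4.

Lemma focal_weight_param (a c t : R) :
  a^2 - c^2*(cx t)^2 = focal_weight (a^2) (c^2) t / (1 + t^2)^2.
Proof. unfold cx, focal_weight. field. apply one_plus_sq_nz. Qed.

Definition focal_weight_pair (A C e1 e2 : R) : R :=
  (A - C)^2 + (A - C)*(2*(A+C))*(e1^2 - 2*e2) + (A - C)^2*((e1^2 - 2*e2)^2 - 2*e2^2)
  + (2*(A+C))^2*e2^2 + (A - C)*(2*(A+C))*e2^2*(e1^2 - 2*e2) + (A - C)^2*(e2^2)^2.

Lemma focal_weight_pair_spec (A C t1 t3 : R) :
  focal_weight A C t1 * focal_weight A C t3 = focal_weight_pair A C (t1+t3) (t1*t3).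
Proof. unfold focal_weight, focal_weight_pair. ring. Qed.

Definition invariant_bracket (A B d : R) : R :=
  (A^2 + 2*A*B + 4*B^2)*d + A^3 + 3/2*A^2*B + 4*B^3.

Lemma invariant_bracket_nonneg (A B d : R) :
  0 <= A -> 0 <= B -> 0 <= d -> 0 <= invariant_bracket A B d.
Proof.
  intros HA HB Hd. unfold invariant_bracket.
  assert (0 <= A^2 + 2*A*B + 4*B^2) by nra.
  assert (0 <= A^3) by (apply pow_le; lra). assert (0 <= B^3) by (apply pow_le; lra).
  assert (0 <= A^2*B) by (apply Rmult_le_pos; [apply pow_le |]; lra).
  nra.
Qed.

Lemma vieta_two_roots (p q r x y : R) :
  p*x^2 + q*x + r = 0 -> p*y^2 + q*y + r = 0 -> x <> y ->
  p*(x + y) = - q /\ p*(x*y) = r.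
Proof.
  intros Hx Hy Hxy.
  assert (Hd : x - y <> 0) by lra.
  split.
  - assert (H : (x - y)*(p*(x + y) + q) = 0).
    { transitivity ((p*x^2 + q*x + r) - (p*y^2 + q*y + r)); [ring | rewrite Hx, Hy; ring]. }
    apply Rmult_integral in H as [H | H]; lra.
  - assert (H : (x - y)*(p*(x*y) - r) = 0).
    { transitivity (y*(p*x^2 + q*x + r) - x*(p*y^2 + q*y + r)); [ring | rewrite Hx, Hy; ring]. }
    apply Rmult_integral in H as [H | H]; lra.
Qed.

Lemma caustic_side_quadratic (u t t' : R) :
  caustic_side u (cx t) (cy t) (cx t') (cy t') ->
  ((1-u)*((u-1) + (u+1)*t'^2))*t^2 + (4*u*t')*t + (1-u)*((u+1) + (u-1)*t'^2) = 0.
Proof.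
  unfold caustic_side. intro H.
  transitivity ((u*(1-u) + (1-u)*(cx t*cx t') + u*(cy t*cy t'))*((1+t^2)*(1+t'^2))).
  - unfold cx, cy. field. split; apply one_plus_sq_nz.
  - rewrite H. ring.
Qed.

(** The computational core: with A = a^2, C = c^2 expressed through the caustic parameter,
    and e1, e2 the sum and product of the two roots t1, t3 of the quadratic of the sides
    through the vertex of parameter t2, the invariant is a rational identity in u, t2. *)
Lemma caustic_invariant_rational (A C u t2 e1 e2 : R) :
  1/2 < u < 1 -> (u-1) + (u+1)*t2^2 <> 0 ->
  A = C*u*(2-u)/(2*u-1) ->
  e1 = - (4*u*t2) / ((1-u)*((u-1) + (u+1)*t2^2)) ->
  e2 = ((1-u)*((u+1) + (u-1)*t2^2)) / ((1-u)*((u-1) + (u+1)*t2^2)) ->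
  2*A^4*(A-C)^2*(e1^2 - 4*e2)*(e2 - t2*e1 + t2^2)^2
   * (16*A*(cubic_even A C (t2+e1) (e2+t2*e1) (t2*e2))^2
      - 64*C^3*(cubic_odd (t2+e1) (e2+t2*e1) (t2*e2))^2)
  = invariant_bracket A (A-C) ((A-C) + u*C) * (focal_weight A C t2 * focal_weight_pair A C e1 e2)^2.
Proof.
  intros Hu Ht2 -> -> ->.
  unfold invariant_bracket, focal_weight, focal_weight_pair, cubic_even, cubic_odd.
  field. repeat split; lra.
Qed.

Definition focal_product_identity (a c u X1 Y1 X2 Y2 X3 Y3 : R) : Prop :=
  2*a^8*(a^2-c^2)^2 * focal_numerator a c X1 Y1 X2 Y2 X3 Y3
    * focal_numerator a (-c) X1 Y1 X2 Y2 X3 Y3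
  = invariant_bracket (a^2) (a^2-c^2) ((a^2-c^2) + u*c^2)
    * ((a^2 - c^2*X1^2)*(a^2 - c^2*X2^2)*(a^2 - c^2*X3^2))^2.

Lemma caustic_roots_vieta (u t1 t2 t3 : R) :
  1/2 < u < 1 ->
  caustic_side u (cx t1) (cy t1) (cx t2) (cy t2) ->
  caustic_side u (cx t2) (cy t2) (cx t3) (cy t3) ->
  t1 <> t3 ->
  (u-1) + (u+1)*t2^2 <> 0 /\
  t1 + t3 = - (4*u*t2) / ((1-u)*((u-1) + (u+1)*t2^2)) /\
  t1*t3 = ((1-u)*((u+1) + (u-1)*t2^2)) / ((1-u)*((u-1) + (u+1)*t2^2)).
Proof.
  intros Hu S12 S23 H13.
  set (p := (1-u)*((u-1) + (u+1)*t2^2)).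
  set (q := 4*u*t2).
  set (r := (1-u)*((u+1) + (u-1)*t2^2)).
  assert (Q1 : p*t1^2 + q*t1 + r = 0) by exact (caustic_side_quadratic u t1 t2 S12).
  assert (Q3 : p*t3^2 + q*t3 + r = 0).
  { apply caustic_side_quadratic. unfold caustic_side in *. lra. }
  destruct (vieta_two_roots p q r t1 t3 Q1 Q3 H13) as [Vsum Vprod].
  assert (Hlead : (u-1) + (u+1)*t2^2 <> 0).
  { intro H0. assert (Hp : p = 0) by (unfold p; rewrite H0; ring).
    rewrite Hp in Vsum. assert (Ht2 : t2 = 0) by (unfold q in Vsum; nra).
    rewrite Ht2 in H0. lra. }
  assert (Hp : p <> 0) by (unfold p; apply Rmult_integral_contrapositive; split; lra).
  split; [exact Hlead | split].
  - apply (Rmult_eq_reg_l p); [rewrite Vsum; field | ]; exact Hp.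
  - apply (Rmult_eq_reg_l p); [rewrite Vprod; field | ]; exact Hp.
Qed.

Lemma focal_product_identity_param (a c u t1 t2 t3 : R) :
  1/2 < u < 1 -> a^2 = c^2*u*(2-u)/(2*u-1) ->
  caustic_side u (cx t1) (cy t1) (cx t2) (cy t2) ->
  caustic_side u (cx t2) (cy t2) (cx t3) (cy t3) ->
  t1 <> t3 ->
  focal_product_identity a c u (cx t1) (cy t1) (cx t2) (cy t2) (cx t3) (cy t3).
Proof.
  intros Hu Ha2 S12 S23 H13.
  destruct (caustic_roots_vieta u t1 t2 t3 Hu S12 S23 H13) as (Hlead & E1 & E2).
  pose proof (caustic_invariant_rational (a^2) (c^2) u t2 (t1+t3) (t1*t3) Hu Hlead Ha2 E1 E2)
    as Core.
  replace (t2 + (t1+t3)) with (t1+t2+t3) in Core by ring.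
  replace (t1*t3 + t2*(t1+t3)) with (t1*t2+t2*t3+t3*t1) in Core by ring.
  replace (t2*(t1*t3)) with (t1*t2*t3) in Core by ring.
  rewrite <- focal_cubic_product, <- focal_weight_pair_spec in Core.
  unfold focal_product_identity.
  rewrite !focal_numerator_param, !focal_weight_param.
  assert (D1 := one_plus_sq_nz t1). assert (D2 := one_plus_sq_nz t2).
  assert (D3 := one_plus_sq_nz t3).
  assert (Hden : (1+t1^2)^4*(1+t2^2)^4*(1+t3^2)^4 <> 0).
  { apply Rmult_integral_contrapositive; split; [apply Rmult_integral_contrapositive; split |];
      apply pow_nonzero; assumption. }
  apply (Rmult_eq_reg_r ((1+t1^2)^4*(1+t2^2)^4*(1+t3^2)^4)); [| exact Hden].
  (* the squared Vandermonde product is (e1^2 - 4 e2)(e2 - t2 e1 + t2^2)^2 *)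
  transitivity (2*(a^2)^4*(a^2-c^2)^2*((t1+t3)^2 - 4*(t1*t3))*((t1*t3) - t2*(t1+t3) + t2^2)^2
    * (focal_cubic a c (t1+t2+t3) (t1*t2+t2*t3+t3*t1) (t1*t2*t3)
       * focal_cubic a (-c) (t1+t2+t3) (t1*t2+t2*t3+t3*t1) (t1*t2*t3))).
  - field. auto.
  - rewrite Core. field. auto.
Qed.

Lemma focal_product_identity_generic (a c u X1 Y1 X2 Y2 X3 Y3 : R) :
  1/2 < u < 1 -> a^2 = c^2*u*(2-u)/(2*u-1) ->
  X1^2 + Y1^2 = 1 -> X2^2 + Y2^2 = 1 -> X3^2 + Y3^2 = 1 ->
  X1 <> -1 -> X2 <> -1 -> X3 <> -1 ->
  caustic_side u X1 Y1 X2 Y2 -> caustic_side u X2 Y2 X3 Y3 ->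
  (X1, Y1) <> (X3, Y3) ->
  focal_product_identity a c u X1 Y1 X2 Y2 X3 Y3.
Proof.
  intros Hu Ha2 C1 C2 C3 N1 N2 N3 S12 S23 D13.
  destruct (circle_param X1 Y1 C1 N1) as [t1 [-> ->]].
  destruct (circle_param X2 Y2 C2 N2) as [t2 [-> ->]].
  destruct (circle_param X3 Y3 C3 N3) as [t3 [-> ->]].
  apply focal_product_identity_param; auto.
  intros <-. apply D13. reflexivity.
Qed.

(** The reflection X -> -X exchanges the two foci, so the identity is reflection-invariant. *)
Lemma focal_numerator_reflect (a s X1 Y1 X2 Y2 X3 Y3 : R) :
  focal_numerator a s (-X1) Y1 (-X2) Y2 (-X3) Y3 = - focal_numerator a (-s) X1 Y1 X2 Y2 X3 Y3.
Proof. unfold focal_numerator. ring. Qed.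

Lemma focal_product_identity_reflect (a c u X1 Y1 X2 Y2 X3 Y3 : R) :
  focal_product_identity a c u (-X1) Y1 (-X2) Y2 (-X3) Y3 ->
  focal_product_identity a c u X1 Y1 X2 Y2 X3 Y3.
Proof.
  unfold focal_product_identity. intro K.
  rewrite !focal_numerator_reflect, Ropp_involutive in K.
  replace ((-X1)^2) with (X1^2) in K by ring.
  replace ((-X2)^2) with (X2^2) in K by ring.
  replace ((-X3)^2) with (X3^2) in K by ring.
  rewrite <- K. ring.
Qed.

Lemma caustic_side_sym (u X Y X' Y' : R) :
  caustic_side u X Y X' Y' -> caustic_side u X' Y' X Y.
Proof. unfold caustic_side. intro H. rewrite <- H. ring. Qed.

Lemma caustic_side_not_diameter (u X Y X' Y' : R) :
  X = -1 -> caustic_side u X Y X' Y' -> X^2 + Y^2 = 1 -> X'^2 + Y'^2 = 1 -> u < 1 ->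
  X' <> 1.
Proof.
  unfold caustic_side. intros -> S C C' Hu ->.
  assert (Y = 0) by nra. assert (Y' = 0) by nra. subst.
  nra.
Qed.

(** The identity for every triangle of the unit circle whose sides touch the caustic: if
    some vertex is (-1, 0), no vertex is (1, 0) and the reflected triangle is generic. *)
Lemma focal_product_identity_caustic (a c u X1 Y1 X2 Y2 X3 Y3 : R) :
  1/2 < u < 1 -> a^2 = c^2*u*(2-u)/(2*u-1) ->
  X1^2 + Y1^2 = 1 -> X2^2 + Y2^2 = 1 -> X3^2 + Y3^2 = 1 ->
  caustic_side u X1 Y1 X2 Y2 -> caustic_side u X2 Y2 X3 Y3 -> caustic_side u X3 Y3 X1 Y1 ->
  (X1, Y1) <> (X3, Y3) ->
  focal_product_identity a c u X1 Y1 X2 Y2 X3 Y3.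
Proof.
  intros Hu Ha2 C1 C2 C3 S12 S23 S31 D13.
  assert (S21 := caustic_side_sym _ _ _ _ _ S12).
  assert (S32 := caustic_side_sym _ _ _ _ _ S23).
  assert (S13 := caustic_side_sym _ _ _ _ _ S31).
  assert (Hu1 : u < 1) by lra.
  assert (Hcase : (X1 <> -1 /\ X2 <> -1 /\ X3 <> -1) \/ (X1 <> 1 /\ X2 <> 1 /\ X3 <> 1)).
  { destruct (Req_dec X1 (-1)); [| destruct (Req_dec X2 (-1)); [| destruct (Req_dec X3 (-1))]];
      [right | right | right | left]; repeat split;
      solve [assumption | lra | eapply caustic_side_not_diameter; eassumption]. }
  destruct Hcase as [(N1 & N2 & N3) | (N1 & N2 & N3)].
  - apply focal_product_identity_generic; assumption.
  - apply focal_product_identity_reflect, focal_product_identity_generic;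
      try assumption; try lra.
    + unfold caustic_side in *. rewrite <- S12. ring.
    + unfold caustic_side in *. rewrite <- S23. ring.
    + intro E. injection E as E1 E2. apply D13. f_equal; lra.
Qed.

(** Multiplying the area formulas about the two foci, the focal distances pair up into
    a^2 - c^2 X_i^2, whose product the focal identity cancels. *)
Lemma focal_area_product (a b c rho u X1 Y1 X2 Y2 X3 Y3 : R) :
  0 < b -> b < a -> c^2 = a^2 - b^2 -> 0 <= u ->
  X1^2 + Y1^2 = 1 -> X2^2 + Y2^2 = 1 -> X3^2 + Y3^2 = 1 ->
  focal_product_identity a c u X1 Y1 X2 Y2 X3 Y3 ->
  inversive_area rho (-c, 0) (a*X1, b*Y1) (a*X2, b*Y2) (a*X3, b*Y3)
  * inversive_area rho (c, 0) (a*X1, b*Y1) (a*X2, b*Y2) (a*X3, b*Y3)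
  = rho^8 / (8*a^8*b^2) * invariant_bracket (a^2) (b^2) (b^2 + u*c^2).
Proof.
  intros Hb Hab Hc2 Hu C1 C2 C3 K.
  assert (Hmc2 : (-c)^2 = a^2 - b^2) by (rewrite <- Hc2; ring).
  rewrite (focal_inversive_area a b (-c) rho _ _ _ _ _ _ Hb Hab Hmc2 C1 C2 C3).
  rewrite (focal_inversive_area a b c rho _ _ _ _ _ _ Hb Hab Hc2 C1 C2 C3).
  assert (F1 := proj2 (focal_distance a b (-c) X1 Y1 Hb Hab Hmc2 C1)).
  assert (F2 := proj2 (focal_distance a b (-c) X2 Y2 Hb Hab Hmc2 C2)).
  assert (F3 := proj2 (focal_distance a b (-c) X3 Y3 Hb Hab Hmc2 C3)).
  assert (G1 := proj2 (focal_distance a b c X1 Y1 Hb Hab Hc2 C1)).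
  assert (G2 := proj2 (focal_distance a b c X2 Y2 Hb Hab Hc2 C2)).
  assert (G3 := proj2 (focal_distance a b c X3 Y3 Hb Hab Hc2 C3)).
  unfold focal_product_identity in K. replace (a^2 - c^2) with (b^2) in K by lra.
  set (T1 := focal_numerator a (-c) X1 Y1 X2 Y2 X3 Y3) in *.
  set (T2 := focal_numerator a c X1 Y1 X2 Y2 X3 Y3) in *.
  set (W := (a^2 - c^2*X1^2)*(a^2 - c^2*X2^2)*(a^2 - c^2*X3^2)) in *.
  set (Kb := invariant_bracket (a^2) (b^2) (b^2 + u*c^2)) in *.
  assert (Ha8 : 0 < a^8) by (apply pow_lt; lra). assert (Hb2 : 0 < b^2) by (apply pow_lt; lra).
  assert (HK : 0 <= Kb).
  { apply invariant_bracket_nonneg; [apply pow2_ge_0 | lra |].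
    assert (0 <= u*c^2) by (apply Rmult_le_pos; [lra | apply pow2_ge_0]). lra. }
  (* the product of the two numerators is nonnegative, so the absolute values combine *)
  assert (HT : (b*T1)*(b*T2) = Kb * W^2 / (2*a^8*b^2)).
  { apply (Rmult_eq_reg_l (2*a^8*b^2)); [| nra]. rewrite <- K. field. lra. }
  assert (HT0 : 0 <= (b*T1)*(b*T2)).
  { rewrite HT. apply Rmult_le_pos; [apply Rmult_le_pos; [exact HK | apply pow2_ge_0] |].
    apply Rlt_le, Rinv_0_lt_compat. nra. }
  transitivity (rho^8 * (Rabs (b*T1) * Rabs (b*T2)) /
     (4*(((a - -c*X1)^2*(a - -c*X2)^2*(a - -c*X3)^2)*((a - c*X1)^2*(a - c*X2)^2*(a - c*X3)^2)))).
  { field. repeat split; lra. }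
  rewrite <- Rabs_mult, (Rabs_pos_eq _ HT0), HT.
  unfold W. field. repeat split; lra.
Qed.

Theorem mainTheorem8 (a b rho : R) (P1 P2 P3 : pt) :
  0 < b -> b < a -> 0 < rho ->
  three_periodic a b P1 P2 P3 ->
  let delta := sqrt (a^4 - a^2 * b^2 + b^4) in
  inversive_area rho (focus1 a b) P1 P2 P3 * inversive_area rho (focus2 a b) P1 P2 P3
  = rho^8 / (8 * a^8 * b^2) *
    ((a^4 + 2 * a^2 * b^2 + 4 * b^4) * delta + a^6 + 3/2 * a^4 * b^2 + 4 * b^6).
Proof.
  intros Hb Hab _ (D12 & D23 & D31 & E1 & E2 & E3 & _ & B2 & B3) delta.
  assert (Ha : 0 < a) by lra.
  destruct (ellipse_unit_coords a b P1 Ha Hb E1) as (X1 & Y1 & -> & C1).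
  destruct (ellipse_unit_coords a b P2 Ha Hb E2) as (X2 & Y2 & -> & C2).
  destruct (ellipse_unit_coords a b P3 Ha Hb E3) as (X3 & Y3 & -> & C3).
  apply unit_coords_distinct in D12, D23, D31.
  assert (D13 : (X1, Y1) <> (X3, Y3)) by congruence.
  destruct (delta_spec a b Hb Hab) as [Hd2 Hd0].
  destruct (caustic_parameter_facts a b delta Hb Hab Hd2 Hd0) as (Hu & Ha2 & Hdelta).
  destruct (three_periodic_caustic a b delta X1 Y1 X2 Y2 X3 Y3 Hb Hab Hd2 Hd0 C1 C2 C3
              D12 D23 D31 (normal_bisects_unit a b _ _ _ _ _ _ Ha Hb C2 B2)
              (normal_bisects_unit a b _ _ _ _ _ _ Ha Hb C3 B3)) as (S12 & S23 & S31).
  set (u := (delta - b^2)/(a^2 - b^2)) in *.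
  set (c := sqrt (a^2 - b^2)).
  assert (Hc2 : c^2 = a^2 - b^2) by (apply pow2_sqrt; nra).
  rewrite <- Hc2 in Ha2, Hdelta.
  unfold focus1, focus2. fold c.
  rewrite (focal_area_product a b c rho u X1 Y1 X2 Y2 X3 Y3 Hb Hab Hc2 ltac:(lra) C1 C2 C3
             (focal_product_identity_caustic a c u _ _ _ _ _ _ Hu Ha2 C1 C2 C3 S12 S23 S31 D13)).
  rewrite Hdelta. unfold invariant_bracket. field. lra.
Qed.
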